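(* Fix $\lambda_1,\lambda_2,\lambda_3\in\mathbb{Z}_{\ge0}$ and an infinite reduced sequence $\mathbf{w}$, with ratio number sequence $\{k_j\}_{j\ge1}$. Then the sequence $\{\log k_j\}_{j\ge1}$ converges to a real number.
   Context: Generalized Markov mutations: $\mu_1(x_1,x_2,x_3)=(\frac{x_2^2+\lambda_1x_2x_3+x_3^2}{x_1},x_2,x_3)$, $\mu_2(x_1,x_2,x_3)=(x_1,\frac{x_1^2+\lambda_2x_1x_3+x_3^2}{x_2},x_3)$, $\mu_3(x_1,x_2,x_3)=(x_1,x_2,\frac{x_1^2+\lambda_3x_1x_2+x_2^2}{x_3})$. A sequence with entries in $\{1,2,3\}$ is reduced if consecutive entries differ. Ratio number sequence: $T_0=(1,1,1)$, $T_j=\mu_{w_j}(T_{j-1})$, and $k_j$ is the $w_j$-th component of $T_j$ divided by the product of the other two components of $T_j$. $\log$ is the natural logarithm. *)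

From Stdlib Require Import Reals.
Open Scope R_scope.

Definition triple := (R * R * R)%type.

Definition fst3 (x : triple) : R := fst (fst x).
Definition snd3 (x : triple) : R := snd (fst x).
Definition thd3 (x : triple) : R := snd x.

Definition mu (l1 l2 l3 : R) (i : nat) (x : triple) : triple :=
  let x1 := fst3 x in let x2 := snd3 x in let x3 := thd3 x in
  match i with
  | 1%nat => ((x2 ^ 2 + l1 * x2 * x3 + x3 ^ 2) / x1, x2, x3)
  | 2%nat => (x1, (x1 ^ 2 + l2 * x1 * x3 + x3 ^ 2) / x2, x3)
  | 3%nat => (x1, x2, (x1 ^ 2 + l3 * x1 * x2 + x2 ^ 2) / x3)
  | _ => x
  end.

(* The sequence w is indexed from 1: w 1, w 2, ... ; w 0 is ignored. *)
Definition reduced_seq (w : nat -> nat) : Prop :=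
  (forall j, (1 <= j)%nat -> (1 <= w j <= 3)%nat) /\
  (forall j, (1 <= j)%nat -> w j <> w (S j)).

Fixpoint Tseq (l1 l2 l3 : R) (w : nat -> nat) (j : nat) : triple :=
  match j with
  | O => (1, 1, 1)
  | S j' => mu l1 l2 l3 (w (S j')) (Tseq l1 l2 l3 w j')
  end.

Definition ratio_num (l1 l2 l3 : R) (w : nat -> nat) (j : nat) : R :=
  let t := Tseq l1 l2 l3 w j in
  match w j with
  | 1%nat => fst3 t / (snd3 t * thd3 t)
  | 2%nat => snd3 t / (fst3 t * thd3 t)
  | _ => thd3 t / (fst3 t * snd3 t)
  end.

From Stdlib Require Import Reals Lra Lia.
Open Scope R_scope.

(* Every mutation preserves the rational function
     K(x) = (x1^2 + x2^2 + x3^2 + l1 x2 x3 + l2 x1 x3 + l3 x1 x2) / (x1 x2 x3),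
   and each ratio x_i / (x_j x_k) = x_i^2 / (x1 x2 x3) is bounded by K, so the
   ratio numbers stay below K(1,1,1).  Along a reduced sequence they also
   increase: after mutating at b, the new ratio is
   (x_a^2 + l_b x_a x_c + x_c^2) / (x1 x2 x3), which dominates the previous
   ratio x_a^2 / (x1 x2 x3).  A bounded increasing sequence of positive reals
   converges to a positive limit, where ln is continuous. *)

Definition ratio (t : triple) (i : nat) : R :=
  match i with
  | 1%nat => fst3 t / (snd3 t * thd3 t)
  | 2%nat => snd3 t / (fst3 t * thd3 t)
  | _ => thd3 t / (fst3 t * snd3 t)
  end.

Definition positive_triple (t : triple) : Prop :=
  0 < fst3 t /\ 0 < snd3 t /\ 0 < thd3 t.

Lemma ratio_numE l1 l2 l3 w j :
  ratio_num l1 l2 l3 w j = ratio (Tseq l1 l2 l3 w j) (w j).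
Proof. reflexivity. Qed.

Lemma ratio_positive t i : positive_triple t -> 0 < ratio t i.
Proof.
  intros (P1 & P2 & P3).
  destruct i as [|[|[|i]]]; apply Rdiv_pos_pos; try apply Rmult_lt_0_compat; assumption.
Qed.

Lemma Rdiv_nonpos (a b : R) : a <= 0 -> 0 < b -> a / b <= 0.
Proof.
  intros Ha Hb; assert (0 < / b) by (apply Rinv_0_lt_compat; exact Hb).
  unfold Rdiv; nra.
Qed.

Lemma markov_quadratic_pos (a b l : R) :
  0 < a -> 0 < b -> 0 <= l -> 0 < a ^ 2 + l * a * b + b ^ 2.
Proof. intros. assert (0 <= l * a * b) by (repeat apply Rmult_le_pos; lra). nra. Qed.

Section Mutation.

Variables l1 l2 l3 : R.
Hypotheses (l1_ge0 : 0 <= l1) (l2_ge0 : 0 <= l2) (l3_ge0 : 0 <= l3).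

Definition markov_invariant (t : triple) : R :=
  let x1 := fst3 t in let x2 := snd3 t in let x3 := thd3 t in
  (x1 ^ 2 + x2 ^ 2 + x3 ^ 2 + l1 * x2 * x3 + l2 * x1 * x3 + l3 * x1 * x2)
  / (x1 * x2 * x3).

Lemma mu_positive i t : positive_triple t -> positive_triple (mu l1 l2 l3 i t).
Proof.
  destruct t as [[x1 x2] x3]; unfold positive_triple, mu, fst3, snd3, thd3; cbn.
  intros (P1 & P2 & P3).
  destruct i as [|[|[|[|i]]]]; cbn; repeat split; try assumption;
    apply Rdiv_pos_pos; try apply markov_quadratic_pos; assumption.
Qed.

Lemma markov_invariant_mu i t :
  positive_triple t -> markov_invariant (mu l1 l2 l3 i t) = markov_invariant t.
Proof.
  destruct t as [[x1 x2] x3].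
  unfold positive_triple, markov_invariant, mu, fst3, snd3, thd3; cbn.
  intros (P1 & P2 & P3).
  pose proof (markov_quadratic_pos x2 x3 l1 P2 P3 l1_ge0).
  pose proof (markov_quadratic_pos x1 x3 l2 P1 P3 l2_ge0).
  pose proof (markov_quadratic_pos x1 x2 l3 P1 P2 l3_ge0).
  destruct i as [|[|[|[|i]]]]; cbn; try reflexivity; field; repeat split; lra.
Qed.

Lemma ratio_le_markov_invariant t i :
  positive_triple t -> ratio t i <= markov_invariant t.
Proof.
  destruct t as [[x1 x2] x3].
  unfold positive_triple, markov_invariant, ratio, fst3, snd3, thd3; cbn.
  intros (P1 & P2 & P3).
  assert (0 <= l1 * x2 * x3) by (repeat apply Rmult_le_pos; lra).
  assert (0 <= l2 * x1 * x3) by (repeat apply Rmult_le_pos; lra).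
  assert (0 <= l3 * x1 * x2) by (repeat apply Rmult_le_pos; lra).
  destruct i as [|[|[|i]]]; apply Rminus_le; field_simplify; try (repeat split; lra).
  all: apply Rdiv_nonpos; [nra | repeat apply Rmult_lt_0_compat; assumption].
Qed.

Lemma ratio_le_ratio_mu a b t :
  positive_triple t -> (1 <= a <= 3)%nat -> (1 <= b <= 3)%nat -> a <> b ->
  ratio t a <= ratio (mu l1 l2 l3 b t) b.
Proof.
  destruct t as [[x1 x2] x3]; unfold positive_triple, ratio, mu, fst3, snd3, thd3; cbn.
  intros (P1 & P2 & P3) Ha Hb Hab.
  assert (0 <= l1 * x2 * x3) by (repeat apply Rmult_le_pos; lra).
  assert (0 <= l2 * x1 * x3) by (repeat apply Rmult_le_pos; lra).
  assert (0 <= l3 * x1 * x2) by (repeat apply Rmult_le_pos; lra).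
  destruct a as [|[|[|[|a]]]]; try lia; destruct b as [|[|[|[|b]]]]; try lia; cbn;
    apply Rminus_le; field_simplify; try (repeat split; lra).
  all: apply Rdiv_nonpos; [nra | repeat apply Rmult_lt_0_compat; assumption].
Qed.

Variable w : nat -> nat.

Lemma Tseq_positive j : positive_triple (Tseq l1 l2 l3 w j).
Proof.
  induction j as [|j IH]; cbn.
  - unfold positive_triple, fst3, snd3, thd3; cbn; lra.
  - apply mu_positive; exact IH.
Qed.

Lemma markov_invariant_Tseq j :
  markov_invariant (Tseq l1 l2 l3 w j) = markov_invariant (1, 1, 1).
Proof.
  induction j as [|j IH]; cbn; [reflexivity|].
  rewrite markov_invariant_mu; [exact IH | apply Tseq_positive].
Qed.

Lemma ratio_num_positive j : 0 < ratio_num l1 l2 l3 w j.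
Proof. rewrite ratio_numE; apply ratio_positive, Tseq_positive. Qed.

Lemma ratio_num_bounded : has_ub (fun n => ratio_num l1 l2 l3 w (S n)).
Proof.
  exists (markov_invariant (1, 1, 1)); intros k [n ->].
  rewrite ratio_numE, <- (markov_invariant_Tseq (S n)).
  apply ratio_le_markov_invariant, Tseq_positive.
Qed.

Lemma ratio_num_growing :
  reduced_seq w -> Un_growing (fun n => ratio_num l1 l2 l3 w (S n)).
Proof.
  intros [w_range w_step] n; rewrite !ratio_numE.
  change (Tseq l1 l2 l3 w (S (S n)))
    with (mu l1 l2 l3 (w (S (S n))) (Tseq l1 l2 l3 w (S n))).
  apply ratio_le_ratio_mu;
    [apply Tseq_positive | apply w_range; lia | apply w_range; lia | apply w_step; lia].
Qed.

End Mutation.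

Lemma ln_growing_bounded_cv (u : nat -> R) :
  (forall n, 0 < u n) -> Un_growing u -> has_ub u ->
  exists L, Un_cv (fun n => ln (u n)) L.
Proof.
  intros u_pos u_growing u_bounded.
  destruct (growing_cv u u_growing u_bounded) as [l u_cv].
  assert (l_pos : 0 < l).
  { pose proof (growing_ineq u l u_growing u_cv 0); pose proof (u_pos 0%nat); lra. }
  exists (ln l).
  apply (continuity_seq ln u l); [|exact u_cv].
  apply derivable_continuous_pt; exists (/ l); apply derivable_pt_lim_ln; exact l_pos.
Qed.

Theorem corollary6p9 (l1 l2 l3 : nat) (w : nat -> nat) :
  reduced_seq w ->
  exists L : R,
    Un_cv (fun n => ln (ratio_num (INR l1) (INR l2) (INR l3) w (S n))) L.
Proof.
  intros w_reduced.
  pose proof (pos_INR l1); pose proof (pos_INR l2); pose proof (pos_INR l3).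
  apply ln_growing_bounded_cv.
  - intro n; apply ratio_num_positive; assumption.
  - apply ratio_num_growing; assumption.
  - apply ratio_num_bounded; assumption.
Qed.
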